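(* Let $k\geq1$ and $0\leq s,t\leq k-1$, with $\lambda^{\pm}_{s,t}\neq 3$ for the sign considered. Then $u^{\pm}_{s,t}\equiv 0$ on $P(k)$ if and only if $u^{\pm}_{s,t}$ is one of: $u^{+}_{s,k-s}$ or $u^{+}_{k-s,s}$ for $1\leq s<k/3$; $u^{-}_{s,k-s}$ for $k/3<s<2k/3$; $u^{+}_{s,2s}$ or $u^{+}_{2s,s}$ for $0\leq s<k/3$; $u^{-}_{s,2s}$ or $u^{-}_{2s,s}$ for $k/3<s<k/2$; $u^{-}_{s,2s-k}$ or $u^{-}_{2s-k,s}$ for $k/2\leq s<2k/3$; $u^{+}_{s,2s-k}$ or $u^{+}_{2s-k,s}$ for $2k/3<s\leq k-1$. Moreover, $w^{\pm}_{s,t}\equiv0$ on $P(k)$ if and only if $w^{\pm}_{s,t}$ is one of: $w^{\pm}_{s,0}$ or $w^{\pm}_{0,t}$ for $0\leq s,t\leq k-1$; $w^{\pm}_{s,s}$ for $0\leq s\leq k-1$; $w^{+}_{s,k-s}$ or $w^{+}_{k-s,s}$ for $1\leq s<k/3$; $w^{-}_{s,k-s}$ for $k/3<s<2k/3$; $w^{+}_{s,2s}$ or $w^{+}_{2s,s}$ for $0\leq s<k/3$; $w^{-}_{s,2s}$ or $w^{-}_{2s,s}$ for $k/3<s<k/2$; $w^{-}_{s,2s-k}$ or $w^{-}_{2s-k,s}$ for $k/2\leq s<2k/3$; $w^{+}_{s,2s-k}$ or $w^{+}_{2s-k,s}$ for $2k/3<s\leq k-1$.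
   Context: Let $\omega=e^{\pi i/3}$, $\mathrm{M}=(1+\omega)/3$, and $P(k)=\{a+b\omega:0\leq a,b\leq k-1\}\cup\{\mathrm{M}+a+b\omega:0\leq a,b\leq k-1\}$, with $a,b$ read modulo $k$. The hexagonal torus $T(k)$ has vertex set $P(k)$, each $a+b\omega$ being adjacent to $\mathrm{M}+a+b\omega$, $\mathrm{M}+(a-1)+b\omega$ and $\mathrm{M}+a+(b-1)\omega$ (indices mod $k$). For $0\leq s,t\leq k-1$ put $$\lambda^{\pm}_{s,t}=3\pm\sqrt{3+2\cos\tfrac{2\pi s}{k}+2\cos\tfrac{2\pi t}{k}+2\cos\tfrac{2\pi(s-t)}{k}},$$ and, when $\lambda^{\pm}_{s,t}\neq3$, define $v^{\pm}_{s,t}\colon P(k)\to\mathbb{C}$ by $v^{\pm}_{s,t}(a+b\omega)=e^{2\pi i(sa+tb)/k}$ and $v^{\pm}_{s,t}(\mathrm{M}+a+b\omega)=\frac{1}{3-\lambda^{\pm}_{s,t}}\,e^{2\pi i(sa+tb)/k}(1+e^{2\pi is/k}+e^{2\pi it/k})$; these are Laplacian eigenfunctions of $T(k)$ with eigenvalue $\lambda^{\pm}_{s,t}$. Let $D_6$ be the group of automorphisms of $T(k)$ generated by (indices mod $k$) the rotation $a+b\omega\mapsto (k-a-b-1)+a\omega$, $\mathrm{M}+a+b\omega\mapsto\mathrm{M}+(k-a-b-2)+a\omega$; the reflection $\rho_1$: $a+b\omega\mapsto b+a\omega$, $\mathrm{M}+a+b\omega\mapsto\mathrm{M}+b+a\omega$;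 and the reflection $\rho_2$: $a+b\omega\mapsto\mathrm{M}+(k-b-1)+(k-a-1)\omega$, $\mathrm{M}+a+b\omega\mapsto(k-b-1)+(k-a-1)\omega$. Let $\mathrm{sgn}\colon D_6\to\{\pm1\}$ be the homomorphism sending the rotation and $\rho_2$ to $+1$ and $\rho_1$ to $-1$ (the parity of the number of $\rho_1$'s in a word for $\sigma$). With $(\sigma f)(x)=f(\sigma x)$, set $u^{\pm}_{s,t}=\sum_{\sigma\in D_6}\sigma v^{\pm}_{s,t}$ and $w^{\pm}_{s,t}=\sum_{\sigma\in D_6}\mathrm{sgn}(\sigma)\,\sigma v^{\pm}_{s,t}$, functions on $P(k)$. *)

From Stdlib Require Import Reals ZArith List.
From Coquelicot Require Import Coquelicot.
Open Scope R_scope.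

(* Vertices of the hexagonal torus T(k): VA a b = a + b*omega,
   VB a b = M + a + b*omega; coordinates are integers read modulo k,
   P(k) being represented by 0 <= a, b <= k-1. *)
Inductive vtx : Type := VA (a b : Z) | VB (a b : Z).

Definition in_P (k : nat) (x : vtx) : Prop :=
  match x with
  | VA a b | VB a b => (0 <= a < Z.of_nat k)%Z /\ (0 <= b < Z.of_nat k)%Z
  end.

Definition rotv (k : nat) (x : vtx) : vtx :=
  let K := Z.of_nat k in
  match x with
  | VA a b => VA ((K - a - b - 1) mod K) (a mod K)
  | VB a b => VB ((K - a - b - 2) mod K) (a mod K)
  end.

Definition rho1 (k : nat) (x : vtx) : vtx :=
  let K := Z.of_nat k in
  match x with
  | VA a b => VA (b mod K) (a mod K)
  | VB a b => VB (b mod K) (a mod K)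
  end.

Definition rho2 (k : nat) (x : vtx) : vtx :=
  let K := Z.of_nat k in
  match x with
  | VA a b => VB ((K - b - 1) mod K) ((K - a - 1) mod K)
  | VB a b => VA ((K - b - 1) mod K) ((K - a - 1) mod K)
  end.

(* The 12 elements of D_6 = <rot, rho1, rho2> are the words
   rot^j rho1^e rho2^f (j < 3, e, f booleans); sgn = (-1)^e. *)
Definition D6 : list (nat * bool * bool) :=
  flat_map (fun j => flat_map (fun e => map (fun f => (j, e, f)) (true :: false :: nil))
                               (true :: false :: nil)) (0 :: 1 :: 2 :: nil)%nat.

Definition act (k : nat) (g : nat * bool * bool) (x : vtx) : vtx :=
  let '(j, e, f) := g in
  Nat.iter j (rotv k) ((if e then rho1 k else (fun y : vtx => y)) ((if f then rho2 k else (fun y : vtx => y)) x)).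

Definition sgn (g : nat * bool * bool) : R :=
  let '(_, e, _) := g in if e then -1 else 1.

Definition expi (th : R) : C := (cos th, sin th).

Definition pmR (pm : bool) : R := if pm then 1 else -1.

Definition lam (k : nat) (pm : bool) (s t : nat) : R :=
  3 + pmR pm * sqrt (3 + 2 * cos (2 * PI * INR s / INR k)
                       + 2 * cos (2 * PI * INR t / INR k)
                       + 2 * cos (2 * PI * (INR s - INR t) / INR k)).

Definition vfun (k : nat) (pm : bool) (s t : nat) (x : vtx) : C :=
  match x with
  | VA a b => expi (2 * PI * (INR s * IZR a + INR t * IZR b) / INR k)
  | VB a b => Cmult (Cinv (RtoC (3 - lam k pm s t)))
               (Cmult (expi (2 * PI * (INR s * IZR a + INR t * IZR b) / INR k))
                      (Cplus (Cplus (RtoC 1) (expi (2 * PI * INR s / INR k)))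
                             (expi (2 * PI * INR t / INR k))))
  end.

(* (sigma f)(x) = f (sigma x) *)
Definition ufun (k : nat) (pm : bool) (s t : nat) (x : vtx) : C :=
  fold_right Cplus (RtoC 0) (map (fun g => vfun k pm s t (act k g x)) D6).

Definition wfun (k : nat) (pm : bool) (s t : nat) (x : vtx) : C :=
  fold_right Cplus (RtoC 0)
    (map (fun g => Cmult (RtoC (sgn g)) (vfun k pm s t (act k g x))) D6).

(* The list of indices (pm, s, t) for which u vanishes (fractions k/3 etc.
   are written with cleared denominators). *)
Definition u_list (k : nat) (pm : bool) (s t : nat) : Prop :=
  ((pm = true /\ ((1 <= s /\ 3 * s < k /\ t = k - s)
                 \/ (1 <= t /\ 3 * t < k /\ s = k - t)))
   \/ (pm = false /\ k < 3 * s /\ 3 * s < 2 * k /\ t = k - s)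
   \/ (pm = true /\ ((3 * s < k /\ t = 2 * s) \/ (3 * t < k /\ s = 2 * t)))
   \/ (pm = false /\ ((k < 3 * s /\ 2 * s < k /\ t = 2 * s)
                     \/ (k < 3 * t /\ 2 * t < k /\ s = 2 * t)))
   \/ (pm = false /\ ((k <= 2 * s /\ 3 * s < 2 * k /\ t = 2 * s - k)
                     \/ (k <= 2 * t /\ 3 * t < 2 * k /\ s = 2 * t - k)))
   \/ (pm = true /\ ((2 * k < 3 * s /\ s <= k - 1 /\ t = 2 * s - k)
                    \/ (2 * k < 3 * t /\ t <= k - 1 /\ s = 2 * t - k))))%nat.

Definition w_list (k : nat) (pm : bool) (s t : nat) : Prop :=
  (t = 0 \/ s = 0 \/ s = t \/ u_list k pm s t)%nat.

(* Evaluated at a vertex [a + b omega], each [sigma v] is a character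
   [(a, b) |-> e^(2 pi i (al a + be b) / k)] times a phase, whose frequency [(al, be)] is the image
   of [(s, t)] under the linear part of [sigma]; the six words that move [a + b omega] to a vertex
   [M + ...] carry in addition the factor [c = (1 + e(s) + e(t)) / (3 - lambda)], a unit complex
   number since [|1 + e(s) + e(t)|^2] is the radicand of [lambda].  If [u] (or [w]) vanishes on
   [P(k)], orthogonality of the characters of [(Z/k)^2] kills its coefficient at the frequency
   [(s, t)]; this coefficient is [1] plus the terms whose frequency coincides with [(s, t)], which
   only happens on the lines [s + t = 0], [t = 2 s], [s = 2 t] modulo [k] (and, for the words
   containing [rho1], on [s = 0], [t = 0], [s = t]).  On the three lines
   [1 + e(s) + e(t) = (1 + 2 cos(2 pi n / k)) e(d)], so [c] is [+- e(d)] with a sign read off from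
   [3 n] against [k] and [2 k]; the coefficient then vanishes exactly for the listed indices, and
   for those [c = - e(d)] makes the twelve terms cancel in pairs at every vertex. *)

From Stdlib Require Import Reals ZArith List Bool Lra Lia Setoid Morphisms.
From Coquelicot Require Import Coquelicot.
Open Scope R_scope.
Import ListNotations.

(* [Zdiv] declares the setoid instances of [eqm] only locally. *)
#[local] Existing Instances eqm_setoid Zplus_eqm Zminus_eqm Zmult_eqm Zopp_eqm.

Definition zeta (k : nat) (n : Z) : C := expi (2 * PI * IZR n / INR k).

Lemma expi_add x y : expi (x + y) = Cmult (expi x) (expi y).
Proof. unfold expi, Cmult; cbn. rewrite cos_plus, sin_plus. f_equal; ring. Qed.

Lemma expi_period x n : expi (x + 2 * IZR n * PI) = expi x.
Proof.
  assert (Hnat : forall y m, expi (y + 2 * INR m * PI) = expi y)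
    by (intros; unfold expi; f_equal; [apply cos_period | apply sin_period]).
  destruct (Z_le_gt_dec 0 n).
  - rewrite <- (Z2Nat.id n), <- INR_IZR_INZ by lia. apply Hnat.
  - rewrite <- (Hnat _ (Z.to_nat (- n))). f_equal.
    rewrite INR_IZR_INZ, Z2Nat.id, opp_IZR by lia. ring.
Qed.

Lemma Cmod_expi x : Cmod (expi x) = 1.
Proof.
  unfold Cmod, expi. cbn [fst snd]. rewrite <- sqrt_1. f_equal.
  pose proof (sin2_cos2 x). unfold Rsqr in *. lra.
Qed.

Lemma zeta_add k m n : zeta k (m + n) = Cmult (zeta k m) (zeta k n).
Proof. unfold zeta. rewrite <- expi_add, plus_IZR. f_equal. unfold Rdiv. ring. Qed.

Lemma zeta_0 k : zeta k 0 = RtoC 1.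
Proof. unfold zeta, expi. rewrite Rmult_0_r, Rdiv_0_l, cos_0, sin_0. reflexivity. Qed.

Lemma zeta_period k n m : (1 <= k)%nat -> zeta k (n + Z.of_nat k * m) = zeta k n.
Proof.
  intros Hk. unfold zeta. rewrite <- (expi_period (2 * PI * IZR n / INR k) m). f_equal.
  assert (INR k <> 0) by (apply not_0_INR; lia).
  rewrite plus_IZR, mult_IZR, <- INR_IZR_INZ. field. assumption.
Qed.

(* For [k = 0] the division by [INR 0] makes [zeta 0] constant, so no hypothesis is needed. *)
#[export] Instance zeta_eqm k : Proper (eqm (Z.of_nat k) ==> eq) (zeta k).
Proof.
  intros m n Hmn. destruct k as [|k].
  - unfold zeta. cbn [INR]. now rewrite !Rdiv_0_r.
  - unfold eqm in Hmn.
    rewrite (Z.div_mod m (Z.of_nat (S k))), (Z.div_mod n (Z.of_nat (S k))), Hmn by lia.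
    rewrite !(Z.add_comm _ (n mod _)), !zeta_period by lia. reflexivity.
Qed.

Lemma eqm_modulus K : eqm K K 0.
Proof. unfold eqm. now rewrite Z_mod_same_full, Zmod_0_l. Qed.

Lemma eqm_of_multiple K x y m : x = (y + K * m)%Z -> eqm K x y.
Proof. intros ->. unfold eqm. now rewrite Z.mul_comm, Z_mod_plus_full. Qed.

Lemma zeta_multiple k n m : (1 <= k)%nat -> n = (Z.of_nat k * m)%Z -> zeta k n = RtoC 1.
Proof. intros Hk ->. rewrite <- (Z.add_0_l (_ * _)), zeta_period by assumption. apply zeta_0. Qed.

Lemma zeta_odd_half_multiple k n m : (1 <= k)%nat ->
  (2 * n = Z.of_nat k * (2 * m + 1))%Z -> zeta k n = RtoC (-1).
Proof.
  intros Hk Hn. assert (INR k <> 0) by (apply not_0_INR; lia).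
  assert (Hr : 2 * IZR n = INR k * (2 * IZR m + 1)).
  { rewrite INR_IZR_INZ, <- mult_IZR, Hn, mult_IZR, plus_IZR, mult_IZR. reflexivity. }
  unfold zeta. replace (2 * PI * IZR n / INR k) with (PI + 2 * IZR m * PI).
  - rewrite expi_period. unfold expi. now rewrite cos_PI, sin_PI.
  - replace (2 * PI * IZR n) with (PI * (2 * IZR n)) by ring. rewrite Hr. field. assumption.
Qed.

Lemma cos_lt_1 x : 0 < x < 2 * PI -> cos x < 1.
Proof.
  intros [H0 H2]. pose proof PI_RGT_0. rewrite <- cos_0.
  destruct (Rle_lt_dec x PI).
  - apply cos_decreasing_1; lra.
  - rewrite <- cos_neg, <- (cos_period (- x) 1). apply cos_decreasing_1; cbn [INR]; lra.
Qed.

Lemma zeta_neq_1 k n : (1 <= k)%nat -> (n mod Z.of_nat k <> 0)%Z -> zeta k n <> RtoC 1.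
Proof.
  intros Hk Hn Heq. rewrite <- (Zmod_eqm (Z.of_nat k) n) in Heq.
  pose proof (Z.mod_pos_bound n (Z.of_nat k) ltac:(lia)) as Hb.
  assert (0 < INR k) by (apply lt_0_INR; lia).
  assert (0 < IZR (n mod Z.of_nat k) < INR k)
    by (rewrite INR_IZR_INZ; split; apply IZR_lt; lia).
  assert (Hx : 0 < 2 * PI * IZR (n mod Z.of_nat k) / INR k < 2 * PI).
  { pose proof PI_RGT_0. split.
    - apply Rdiv_lt_0_compat; nra.
    - apply Rmult_lt_reg_r with (INR k); [assumption|].
      unfold Rdiv. rewrite Rmult_assoc, Rinv_l by lra. nra. }
  unfold zeta, expi in Heq. injection Heq as Hc _.
  pose proof (cos_lt_1 _ Hx). lra.
Qed.

Lemma Copp_zeta_mul k m n : Cmult (Copp (zeta k m)) (zeta k n) = Copp (zeta k (m + n)).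
Proof. rewrite zeta_add. ring. Qed.

Fixpoint sumN (n : nat) (f : nat -> C) : C :=
  match n with O => RtoC 0 | S n' => Cplus (sumN n' f) (f n') end.

Lemma sumN_ext n f g : (forall i, (i < n)%nat -> f i = g i) -> sumN n f = sumN n g.
Proof.
  induction n as [|n IH]; intros H; cbn; [reflexivity|].
  rewrite IH, H; [reflexivity | lia | intros; apply H; lia].
Qed.

Lemma sumN_add n f g : sumN n (fun i => Cplus (f i) (g i)) = Cplus (sumN n f) (sumN n g).
Proof. induction n as [|n IH]; cbn; [ring|]. rewrite IH. ring. Qed.

Lemma sumN_mult_l n c f : sumN n (fun i => Cmult c (f i)) = Cmult c (sumN n f).
Proof. induction n as [|n IH]; cbn; [ring|]. rewrite IH. ring. Qed.

Lemma sumN_mult_r n c f : sumN n (fun i => Cmult (f i) c) = Cmult (sumN n f) c.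
Proof. induction n as [|n IH]; cbn; [ring|]. rewrite IH. ring. Qed.

Lemma sumN_const n c : sumN n (fun _ => c) = Cmult (RtoC (INR n)) c.
Proof.
  induction n as [|n IH]; cbn [sumN]; [cbn; ring|].
  rewrite IH, S_INR, RtoC_plus. ring.
Qed.

Lemma Cmult_eq0_l x y : x <> RtoC 0 -> Cmult x y = RtoC 0 -> y = RtoC 0.
Proof.
  intros Hx H. replace y with (Cmult (Cinv x) (Cmult x y)) by (field; assumption).
  rewrite H. ring.
Qed.

Lemma zeta_mul_nat k m n : zeta k (m * Z.of_nat n) = Cpow (zeta k m) n.
Proof.
  induction n as [|n IH]; cbn [Cpow].
  - rewrite Z.mul_0_r. apply zeta_0.
  - rewrite Nat2Z.inj_succ, <- Z.add_1_r, Z.mul_add_distr_l, Z.mul_1_r, zeta_add, IH. ring.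
Qed.

Lemma geometric_sum z n :
  Cmult (Cminus z (RtoC 1)) (sumN n (Cpow z)) = Cminus (Cpow z n) (RtoC 1).
Proof.
  induction n as [|n IH]; cbn [sumN Cpow]; [ring|].
  rewrite Cmult_plus_distr_l, IH. ring.
Qed.

Lemma zeta_sum k m : (1 <= k)%nat ->
  sumN k (fun a => zeta k (m * Z.of_nat a)) =
  if (m mod Z.of_nat k =? 0)%Z then RtoC (INR k) else RtoC 0.
Proof.
  intros Hk. destruct (Z.eqb_spec (m mod Z.of_nat k) 0) as [H|H].
  - rewrite (sumN_ext _ _ (fun _ => RtoC 1)), sumN_const by
      (intros; apply zeta_multiple with (m := (m / Z.of_nat k * Z.of_nat i)%Z); [assumption|];
       rewrite (Z.div_mod m (Z.of_nat k)) at 1 by lia; rewrite H; ring).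
    ring.
  - apply (Cmult_eq0_l (Cminus (zeta k m) (RtoC 1))).
    + intros H0. apply (zeta_neq_1 k m Hk H).
      replace (zeta k m) with (Cplus (Cminus (zeta k m) (RtoC 1)) (RtoC 1)) by ring.
      rewrite H0. ring.
    + rewrite (sumN_ext _ _ (Cpow (zeta k m))) by (intros; apply zeta_mul_nat).
      rewrite geometric_sum, <- zeta_mul_nat, (zeta_multiple k _ m Hk) by ring. ring.
Qed.

Fixpoint exp_sum (k : nat) (L : list (C * Z * Z * Z)) (a b : Z) : C :=
  match L with
  | nil => RtoC 0
  | (c, al, be, ga) :: L' => Cplus (Cmult c (zeta k (al * a + be * b + ga))) (exp_sum k L' a b)
  end.

Fixpoint exp_coef (k : nat) (L : list (C * Z * Z * Z)) (sg ta : Z) : C :=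
  match L with
  | nil => RtoC 0
  | (c, al, be, ga) :: L' =>
      Cplus (if ((al - sg) mod Z.of_nat k =? 0)%Z && ((be - ta) mod Z.of_nat k =? 0)%Z
             then Cmult c (zeta k ga) else RtoC 0)
            (exp_coef k L' sg ta)
  end.

Lemma exp_sum_fourier k L sg ta : (1 <= k)%nat ->
  sumN k (fun a => sumN k (fun b =>
    Cmult (exp_sum k L (Z.of_nat a) (Z.of_nat b)) (zeta k (- sg * Z.of_nat a - ta * Z.of_nat b))))
  = Cmult (RtoC (INR k * INR k)) (exp_coef k L sg ta).
Proof.
  intros Hk. induction L as [|[[[c al] be] ga] L IH]; cbn [exp_sum exp_coef].
  - rewrite (sumN_ext _ _ (fun _ => RtoC 0)), sumN_const; [ring|].
    intros. rewrite (sumN_ext _ _ (fun _ => RtoC 0)), sumN_const; [ring|]. intros. ring.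
  - rewrite (sumN_ext _ _ (fun a => Cplus
        (Cmult (Cmult (Cmult c (zeta k ga)) (zeta k ((al - sg) * Z.of_nat a)))
               (sumN k (fun b => zeta k ((be - ta) * Z.of_nat b))))
        (sumN k (fun b => Cmult (exp_sum k L (Z.of_nat a) (Z.of_nat b))
                                (zeta k (- sg * Z.of_nat a - ta * Z.of_nat b)))))).
    + rewrite sumN_add, IH, sumN_mult_r, sumN_mult_l, !zeta_sum by assumption.
      destruct ((al - sg) mod Z.of_nat k =? 0)%Z, ((be - ta) mod Z.of_nat k =? 0)%Z;
        cbn [andb]; rewrite ?RtoC_mult; ring.
    + intros a _. rewrite <- sumN_mult_l, <- sumN_add. apply sumN_ext. intros b _.
      rewrite Cmult_plus_distr_r, <- !Cmult_assoc, <- !zeta_add. f_equal. f_equal. f_equal. ring.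
Qed.

Lemma exp_coef_eq0 k L sg ta : (1 <= k)%nat ->
  (forall a b, (0 <= a < Z.of_nat k)%Z -> (0 <= b < Z.of_nat k)%Z -> exp_sum k L a b = RtoC 0) ->
  exp_coef k L sg ta = RtoC 0.
Proof.
  intros Hk H. apply (Cmult_eq0_l (RtoC (INR k * INR k))).
  - intros H0. injection H0 as H0. assert (0 < INR k) by (apply lt_0_INR; lia). nra.
  - rewrite <- exp_sum_fourier by assumption.
    rewrite (sumN_ext _ _ (fun _ => RtoC 0)), sumN_const; [ring|].
    intros a Ha. rewrite (sumN_ext _ _ (fun _ => RtoC 0)), sumN_const; [ring|].
    intros b Hb. rewrite H by lia. ring.
Qed.

Definition nbr_sum (k s t : nat) : C :=
  Cplus (Cplus (RtoC 1) (zeta k (Z.of_nat s))) (zeta k (Z.of_nat t)).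

Definition vB_ratio (k : nat) (pm : bool) (s t : nat) : C :=
  Cmult (Cinv (RtoC (3 - lam k pm s t))) (nbr_sum k s t).

Lemma vfun_VA k pm s t a b : vfun k pm s t (VA a b) = zeta k (Z.of_nat s * a + Z.of_nat t * b).
Proof. unfold vfun, zeta. rewrite plus_IZR, !mult_IZR, <- !INR_IZR_INZ. reflexivity. Qed.

Lemma vfun_VB k pm s t a b :
  vfun k pm s t (VB a b) = Cmult (vB_ratio k pm s t) (zeta k (Z.of_nat s * a + Z.of_nat t * b)).
Proof. unfold vfun, vB_ratio, nbr_sum, zeta. rewrite plus_IZR, !mult_IZR, <- !INR_IZR_INZ. ring. Qed.

Lemma Cmod_zeta k n : Cmod (zeta k n) = 1.
Proof. apply Cmod_expi. Qed.

Lemma lam_Cmod k pm s t : lam k pm s t = 3 + pmR pm * Cmod (nbr_sum k s t).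
Proof.
  unfold lam, Cmod, nbr_sum, zeta, expi, Cplus, RtoC. rewrite <- !INR_IZR_INZ. cbn [fst snd].
  set (x := 2 * PI * INR s / INR k). set (y := 2 * PI * INR t / INR k).
  replace (2 * PI * (INR s - INR t) / INR k) with (x - y) by (unfold x, y, Rdiv; ring).
  rewrite cos_minus. do 3 f_equal.
  pose proof (sin2_cos2 x). pose proof (sin2_cos2 y). unfold Rsqr in *. nra.
Qed.

Lemma vB_ratio_polar k pm s t r d : nbr_sum k s t = Cmult (RtoC r) (zeta k d) -> r <> 0 ->
  vB_ratio k pm s t = Cmult (RtoC (- pmR pm * (r / Rabs r))) (zeta k d).
Proof.
  intros Hw Hr. assert (Rabs r <> 0) by (apply Rabs_no_R0; assumption).
  unfold vB_ratio. rewrite lam_Cmod, Hw, Cmod_mult, Cmod_R, Cmod_zeta.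
  replace (3 - (3 + pmR pm * (Rabs r * 1))) with (- pmR pm * Rabs r) by ring.
  rewrite Cmult_assoc, <- RtoC_inv, <- RtoC_mult by (destruct pm; cbn; intro; apply H; lra).
  f_equal. f_equal. destruct pm; cbn; field; assumption.
Qed.

Lemma cos_2PI_minus x : cos (2 * PI - x) = cos x.
Proof. rewrite cos_minus, cos_2PI, sin_2PI. ring. Qed.

Lemma cos_2PI3 : cos (2 * PI / 3) = - (1 / 2).
Proof.
  replace (2 * PI / 3) with (PI - PI / 3) by field.
  rewrite Rtrigo_facts.cos_pi_minus, cos_PI3. ring.
Qed.

Lemma one_plus_two_cos_sign x : 0 <= x < 2 * PI ->
  (3 * x < 2 * PI \/ 4 * PI < 3 * x -> 0 < 1 + 2 * cos x) /\
  (2 * PI < 3 * x < 4 * PI -> 1 + 2 * cos x < 0) /\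
  (3 * x = 2 * PI \/ 3 * x = 4 * PI -> 1 + 2 * cos x = 0).
Proof.
  intros Hx. pose proof PI_RGT_0 as HPI. pose proof cos_2PI3 as Hc. split; [|split].
  - intros [H|H].
    + assert (cos (2 * PI / 3) < cos x) by (apply cos_decreasing_1; lra). lra.
    + rewrite <- cos_2PI_minus.
      assert (cos (2 * PI / 3) < cos (2 * PI - x)) by (apply cos_decreasing_1; lra). lra.
  - intros H. destruct (Rle_lt_dec x PI).
    + assert (cos x < cos (2 * PI / 3)) by (apply cos_decreasing_1; lra). lra.
    + rewrite <- cos_2PI_minus.
      assert (cos (2 * PI - x) < cos (2 * PI / 3)) by (apply cos_decreasing_1; lra). lra.
  - intros [H|H].
    + replace x with (2 * PI / 3) by lra. lra.
    + rewrite <- cos_2PI_minus. replace (2 * PI - x) with (2 * PI / 3) by lra. lra.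
Qed.

Definition one_two_cos (k n : nat) : R := 1 + 2 * cos (2 * PI * INR n / INR k).

Lemma one_two_cos_sign k n : (1 <= k)%nat -> (n < k)%nat ->
  ((3 * n < k \/ 2 * k < 3 * n)%nat /\ 0 < one_two_cos k n) \/
  ((k < 3 * n < 2 * k)%nat /\ one_two_cos k n < 0) \/
  one_two_cos k n = 0.
Proof.
  intros Hk Hn. unfold one_two_cos. set (x := 2 * PI * INR n / INR k).
  assert (HK : 0 < INR k) by (apply lt_0_INR; lia).
  assert (Hscale : forall a b : nat,
            INR a * x - INR b * (2 * PI) = 2 * PI / INR k * (INR (a * n) - INR (b * k)))
    by (intros; unfold x; rewrite !mult_INR; field; lra).
  assert (Hpos : 0 < 2 * PI / INR k) by (pose proof PI_RGT_0; apply Rdiv_lt_0_compat; lra).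
  assert (Hcmp : forall a b : nat, (a < b)%nat -> INR a - INR b < 0)
    by (intros a b Hab; apply lt_INR in Hab; lra).
  assert (Hx : 0 <= x < 2 * PI).
  { split.
    - unfold x, Rdiv. pose proof PI_RGT_0. pose proof (pos_INR n).
      apply Rmult_le_pos; [nra | left; apply Rinv_0_lt_compat; assumption].
    - pose proof (Hscale 1%nat 1%nat) as H11. pose proof (Hcmp (1 * n)%nat (1 * k)%nat ltac:(lia)).
      replace (INR 1) with 1 in H11 by reflexivity. nra. }
  destruct (one_plus_two_cos_sign x Hx) as (Hp & Hm & H0).
  pose proof (Hscale 3%nat 1%nat) as H31. pose proof (Hscale 3%nat 2%nat) as H32.
  replace (INR 3) with 3 in H31, H32 by (cbn; ring).
  replace (INR 1) with 1 in H31 by reflexivity. replace (INR 2) with 2 in H32 by (cbn; ring).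
  rewrite Nat.mul_1_l in H31.
  destruct (lt_eq_lt_dec (3 * n) k) as [[H1|H1]|H1];
    [|right; right|destruct (lt_eq_lt_dec (3 * n) (2 * k)) as [[H2|H2]|H2];
                   [right; left|right; right|left]].
  - left. split; [lia|]. apply Hp. left. pose proof (Hcmp _ _ H1). nra.
  - apply H0. left. rewrite H1, Rminus_diag in H31. nra.
  - split; [lia|]. apply Hm. pose proof (Hcmp _ _ H1). pose proof (Hcmp _ _ H2). nra.
  - apply H0. right. rewrite H2, Rminus_diag in H32. nra.
  - split; [lia|]. apply Hp. right. pose proof (Hcmp _ _ H2). nra.
Qed.

Lemma nbr_sum_comm k s t : nbr_sum k s t = nbr_sum k t s.
Proof. unfold nbr_sum. ring. Qed.

Lemma nbr_sum_antidiag k s t : eqm (Z.of_nat k) (Z.of_nat t) (- Z.of_nat s) ->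
  nbr_sum k s t = Cmult (RtoC (one_two_cos k s)) (zeta k 0).
Proof.
  intros Hst. unfold nbr_sum. rewrite Hst, zeta_0.
  unfold zeta, one_two_cos, expi, Cplus, Cmult, RtoC. rewrite opp_IZR, <- INR_IZR_INZ. cbn [fst snd].
  replace (2 * PI * - INR s / INR k) with (- (2 * PI * INR s / INR k)) by (unfold Rdiv; ring).
  rewrite cos_neg, sin_neg. f_equal; ring.
Qed.

Lemma nbr_sum_double k s t : eqm (Z.of_nat k) (Z.of_nat t) (2 * Z.of_nat s) ->
  nbr_sum k s t = Cmult (RtoC (one_two_cos k s)) (zeta k (Z.of_nat s)).
Proof.
  intros Hst. unfold nbr_sum. rewrite Hst, <- Z.add_diag, zeta_add.
  unfold zeta, one_two_cos, expi, Cplus, Cmult, RtoC. rewrite <- INR_IZR_INZ. cbn [fst snd].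
  pose proof (sin2_cos2 (2 * PI * INR s / INR k)). unfold Rsqr in *. f_equal; nra.
Qed.

Definition orbit_line (k s t n : nat) (d : Z) : Prop :=
  (eqm (Z.of_nat k) (Z.of_nat t) (- Z.of_nat s) /\ n = s /\ d = 0%Z) \/
  (eqm (Z.of_nat k) (Z.of_nat t) (2 * Z.of_nat s) /\ n = s /\ d = Z.of_nat s) \/
  (eqm (Z.of_nat k) (Z.of_nat s) (2 * Z.of_nat t) /\ n = t /\ d = Z.of_nat t).

Lemma nbr_sum_orbit_line k s t n d : orbit_line k s t n d ->
  nbr_sum k s t = Cmult (RtoC (one_two_cos k n)) (zeta k d).
Proof.
  intros [(Hst & -> & ->)|[(Hst & -> & ->)|(Hst & -> & ->)]].
  - now apply nbr_sum_antidiag.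
  - now apply nbr_sum_double.
  - rewrite nbr_sum_comm. now apply nbr_sum_double.
Qed.

Lemma vB_ratio_cases k pm s t n d : (1 <= k)%nat -> (n < k)%nat -> lam k pm s t <> 3 ->
  nbr_sum k s t = Cmult (RtoC (one_two_cos k n)) (zeta k d) ->
  ((3 * n < k \/ 2 * k < 3 * n)%nat /\ vB_ratio k pm s t = Cmult (RtoC (- pmR pm)) (zeta k d)) \/
  ((k < 3 * n < 2 * k)%nat /\ vB_ratio k pm s t = Cmult (RtoC (pmR pm)) (zeta k d)).
Proof.
  intros Hk Hn Hl Hw.
  destruct (one_two_cos_sign k n Hk Hn) as [[Hr Hpos]|[[Hr Hneg]|Hzero]].
  - left. split; [assumption|].
    rewrite (vB_ratio_polar _ _ _ _ _ _ Hw), Rabs_pos_eq by lra. do 3 f_equal. field. lra.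
  - right. split; [assumption|].
    rewrite (vB_ratio_polar _ _ _ _ _ _ Hw), Rabs_left by lra. do 3 f_equal. field. lra.
  - exfalso. apply Hl. rewrite lam_Cmod, Hw, Hzero, Cmult_0_l, Cmod_0. ring.
Qed.

(* Proves identities between sums of roots of unity whose exponents agree modulo [k]:
   reductions [mod k] and multiples of [k] are erased up to [eqm], products of roots are
   merged, and roots with exponents equal as integer polynomials are identified. *)
Ltac zeta_ring :=
  rewrite <- ?Cmult_assoc, ?Copp_zeta_mul, <- ?zeta_add;
  match goal with Hk : (1 <= ?k)%nat |- _ =>
    repeat setoid_rewrite (Zmod_eqm (Z.of_nat k));
    repeat setoid_rewrite (eqm_modulus (Z.of_nat k));
    repeat match goal with
    | |- context [zeta k ?p] =>
        repeat match goal with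
               | |- context [zeta k ?q] =>
                   tryif constr_eq p q then fail
                   else replace (zeta k q) with (zeta k p) by (f_equal; ring)
               end;
        generalize (zeta k p); intro
    end;
    ring
  end.

Ltac unfold_orbit :=
  unfold ufun, wfun; cbn -[vfun Z.modulo Z.sub Z.add Z.mul Z.opp];
  rewrite ?vfun_VA, ?vfun_VB.

(* The twelve terms [sigma v] at [VA a b], listed in the order of [D6]; [eps] is the
   sign carried by the words containing [rho1], and [c] the factor of [v] on [VB]. *)
Definition orbit_terms (eps c : C) (S T : Z) : list (C * Z * Z * Z) :=
  [ (Cmult eps c, - S, - T, - S - T); (eps, T, S, 0); (c, - T, - S, - S - T); (RtoC 1, S, T, 0);
    (Cmult eps c, S - T, S, - T); (eps, - S, T - S, - S); (c, S, S - T, - T); (RtoC 1, T - S, - S, - S);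
    (Cmult eps c, T, T - S, - S); (eps, S - T, - T, - T); (c, T - S, T, - S); (RtoC 1, - T, S - T, - T) ]%Z.

Lemma ufun_VA k pm s t a b : (1 <= k)%nat -> ufun k pm s t (VA a b) =
  exp_sum k (orbit_terms (RtoC 1) (vB_ratio k pm s t) (Z.of_nat s) (Z.of_nat t)) a b.
Proof. intros Hk. unfold_orbit. zeta_ring. Qed.

Lemma wfun_VA k pm s t a b : (1 <= k)%nat -> wfun k pm s t (VA a b) =
  exp_sum k (orbit_terms (RtoC (-1)) (vB_ratio k pm s t) (Z.of_nat s) (Z.of_nat t)) a b.
Proof. intros Hk. unfold_orbit. zeta_ring. Qed.

Lemma orbit_vanish_on_line k pm s t n d x : (1 <= k)%nat -> orbit_line k s t n d ->
  vB_ratio k pm s t = Copp (zeta k d) -> ufun k pm s t x = RtoC 0 /\ wfun k pm s t x = RtoC 0.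
Proof.
  intros Hk Hline Hc.
  destruct Hline as [(Hst & _ & ->)|[(Hst & _ & ->)|(Hst & _ & ->)]];
    destruct x; split; unfold_orbit; rewrite Hc, Hst; zeta_ring.
Qed.

Lemma wfun_vanish_degenerate k pm s t x : (1 <= k)%nat ->
  eqm (Z.of_nat k) (Z.of_nat s) 0 \/ eqm (Z.of_nat k) (Z.of_nat t) 0 \/
  eqm (Z.of_nat k) (Z.of_nat s) (Z.of_nat t) ->
  wfun k pm s t x = RtoC 0.
Proof. intros Hk [Hst|[Hst|Hst]]; destruct x; unfold_orbit; rewrite Hst; zeta_ring. Qed.

Ltac eqm_lia :=
  first [ apply (eqm_of_multiple _ _ _ 0); lia
        | apply (eqm_of_multiple _ _ _ 1); lia
        | apply (eqm_of_multiple _ _ _ (-1)); lia ].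

Lemma orbit_line_of_u_list k pm s t : (s < k)%nat -> (t < k)%nat -> u_list k pm s t ->
  exists n d, (n < k)%nat /\ orbit_line k s t n d /\
    (if pm then (3 * n < k \/ 2 * k < 3 * n) else (k < 3 * n < 2 * k))%nat.
Proof.
  intros Hs Ht H. unfold u_list, orbit_line in *.
  destruct H as [[-> [H|H]]|[[-> H]|[[-> [H|H]]|[[-> [H|H]]|[[-> [H|H]]|[-> [H|H]]]]]]].
  all: first
    [ solve [exists s, 0%Z; split; [lia | split; [left; split; [eqm_lia | now split] | cbn; lia]]]
    | solve [exists s, (Z.of_nat s);
             split; [lia | split; [right; left; split; [eqm_lia | now split] | cbn; lia]]]
    | solve [exists t, (Z.of_nat t);
             split; [lia | split; [right; right; split; [eqm_lia | now split] | cbn; lia]]] ].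
Qed.

Lemma orbit_vanish_of_u_list k pm s t x : (1 <= k)%nat -> (s < k)%nat -> (t < k)%nat ->
  lam k pm s t <> 3 -> u_list k pm s t ->
  ufun k pm s t x = RtoC 0 /\ wfun k pm s t x = RtoC 0.
Proof.
  intros Hk Hs Ht Hl Hu.
  destruct (orbit_line_of_u_list k pm s t Hs Ht Hu) as (n & d & Hn & Hline & Hsign).
  apply (orbit_vanish_on_line k pm s t n d x Hk Hline).
  destruct (vB_ratio_cases k pm s t n d Hk Hn Hl (nbr_sum_orbit_line k s t n d Hline))
    as [[Hr ->]|[Hr ->]];
    destruct pm; cbn [pmR] in *; try lia; rewrite ?RtoC_opp; ring.
Qed.

Definition orbit_coef (k : nat) (eps c : C) (s t : nat) : C :=
  exp_coef k (orbit_terms eps c (Z.of_nat s) (Z.of_nat t)) (Z.of_nat s) (Z.of_nat t).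

Lemma mod_eqb_multiple K X q : (0 < K)%Z -> X = (K * q)%Z -> (X mod K =? 0)%Z = true.
Proof. intros HK ->. apply Z.eqb_eq. rewrite Z.mul_comm. apply Z_mod_mult. Qed.

Lemma mod_eqb_small K X : (0 < K)%Z -> (-3 * K < X < 3 * K)%Z ->
  (X <> 0 /\ X <> K /\ X <> - K /\ X <> 2 * K /\ X <> - 2 * K)%Z -> (X mod K =? 0)%Z = false.
Proof.
  intros HK HX HX'. apply Z.eqb_neq. intros H.
  apply Z.mod_divide in H; [|lia]. destruct H as [q ->].
  assert (q < 3)%Z by nia. assert (-3 < q)%Z by nia.
  assert (q = -2 \/ q = -1 \/ q = 0 \/ q = 1 \/ q = 2)%Z as Hq by lia.
  destruct Hq as [-> | [-> | [-> | [-> | ->]]]]; lia.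
Qed.

(* Evaluates the tests [X mod k =? 0] of a Fourier coefficient: every frequency [X] lies in
   [(-3k, 3k)], so [lia] can decide whether it is a multiple of [k]. Tests that the context
   does not decide are hidden during the search and restored at the end. *)
Ltac decide_mod_tests :=
  repeat match goal with
  | |- context [(?X mod ?K =? 0)%Z] =>
      first [ rewrite (mod_eqb_small K X) by lia
            | rewrite (mod_eqb_multiple K X 0) by lia
            | rewrite (mod_eqb_multiple K X 1) by lia
            | rewrite (mod_eqb_multiple K X (-1)) by lia
            | rewrite (mod_eqb_multiple K X 2) by lia
            | rewrite (mod_eqb_multiple K X (-2)) by lia
            | set (X mod K =? 0)%Z ]
  end;
  cbn [andb]; rewrite ?andb_false_r, ?andb_true_r;
  repeat match goal with b := _ : bool |- _ => subst b end.

(* After [decide_mod_tests] the phases that survive are multiples of [k / 2]. *)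
Ltac eval_zetas :=
  rewrite <- ?Cmult_assoc, <- ?zeta_add;
  repeat match goal with
  | Hk : (1 <= ?k)%nat |- context [zeta ?k ?p] =>
      first [ rewrite (zeta_multiple k p 0 Hk) by lia
            | rewrite (zeta_multiple k p 1 Hk) by lia
            | rewrite (zeta_multiple k p (-1) Hk) by lia
            | rewrite (zeta_multiple k p 2 Hk) by lia
            | rewrite (zeta_multiple k p (-2) Hk) by lia
            | rewrite (zeta_odd_half_multiple k p 0 Hk) by lia
            | rewrite (zeta_odd_half_multiple k p (-1) Hk) by lia
            | rewrite (zeta_odd_half_multiple k p 1 Hk) by lia
            | rewrite (zeta_odd_half_multiple k p (-2) Hk) by lia ]
  end.

Ltac solve_u_list :=
  unfold u_list; repeat first [left; solve [lia] | right]; lia.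

Ltac solve_coef_eq0 :=
  unfold orbit_coef, orbit_terms; cbn [exp_coef];
  decide_mod_tests; eval_zetas;
  let H := fresh "H" in
  intros H; apply (f_equal fst) in H; cbn in H;
  match goal with pm : bool |- _ => destruct pm end; cbn [pmR] in H;
  first [exfalso; lra | solve_u_list].

Lemma u_list_of_orbit_coef k pm s t : (1 <= k)%nat -> (s < k)%nat -> (t < k)%nat ->
  lam k pm s t <> 3 -> orbit_coef k (RtoC 1) (vB_ratio k pm s t) s t = RtoC 0 -> u_list k pm s t.
Proof.
  intros Hk Hs Ht Hl.
  (* On each line, the extra splits settle the coincidences of frequencies it leaves open. *)
  destruct (Nat.eq_dec (s + t) k).
  { assert (Hw : nbr_sum k s t = Cmult (RtoC (one_two_cos k s)) (zeta k 0))
      by (apply nbr_sum_antidiag; eqm_lia).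
    destruct (vB_ratio_cases k pm s t s 0 Hk Hs Hl Hw) as [[Hr ->]|[Hr ->]];
      destruct (Nat.eq_dec (2 * s) k); solve_coef_eq0. }
  destruct (Nat.eq_dec t (2 * s)) as [Hst|Hst]; [|destruct (Nat.eq_dec (t + k) (2 * s)) as [Hst'|Hst']].
  1, 2: assert (Hw : nbr_sum k s t = Cmult (RtoC (one_two_cos k s)) (zeta k (Z.of_nat s)))
          by (apply nbr_sum_double; eqm_lia);
        destruct (vB_ratio_cases k pm s t s _ Hk Hs Hl Hw) as [[Hr ->]|[Hr ->]];
        destruct (Nat.eq_dec (2 * s) k), (Nat.eq_dec s 0); solve_coef_eq0.
  destruct (Nat.eq_dec s (2 * t)) as [Hts|Hts]; [|destruct (Nat.eq_dec (s + k) (2 * t)) as [Hts'|Hts']].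
  1, 2: assert (Hw : nbr_sum k s t = Cmult (RtoC (one_two_cos k t)) (zeta k (Z.of_nat t)))
          by (rewrite nbr_sum_comm; apply nbr_sum_double; eqm_lia);
        destruct (vB_ratio_cases k pm s t t _ Hk Ht Hl Hw) as [[Hr ->]|[Hr ->]];
        destruct (Nat.eq_dec (2 * t) k), (Nat.eq_dec t 0); solve_coef_eq0.
  destruct (Nat.eq_dec s 0), (Nat.eq_dec t 0), (Nat.eq_dec s t), (Nat.eq_dec (2 * s) k);
    try (exfalso; lia); solve_coef_eq0.
Qed.

(* Away from the three lines [s = 0], [t = 0], [s = t] no word containing [rho1] contributes to
   the Fourier coefficient at [(s, t)]. *)
Lemma orbit_coef_sign_indep k eps c s t : (1 <= k)%nat -> (s < k)%nat -> (t < k)%nat ->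
  s <> 0%nat -> t <> 0%nat -> s <> t -> orbit_coef k eps c s t = orbit_coef k (RtoC 1) c s t.
Proof.
  intros Hk Hs Ht Hs0 Ht0 Hst. unfold orbit_coef, orbit_terms. cbn [exp_coef].
  destruct (Nat.eq_dec (2 * s) k); decide_mod_tests; ring.
Qed.

Lemma w_list_of_orbit_coef k pm s t : (1 <= k)%nat -> (s < k)%nat -> (t < k)%nat ->
  lam k pm s t <> 3 -> orbit_coef k (RtoC (-1)) (vB_ratio k pm s t) s t = RtoC 0 -> w_list k pm s t.
Proof.
  intros Hk Hs Ht Hl Hw. unfold w_list.
  destruct (Nat.eq_dec t 0); [now left|]. destruct (Nat.eq_dec s 0); [now right; left|].
  destruct (Nat.eq_dec s t); [now right; right; left|]. right; right; right.
  apply u_list_of_orbit_coef; [assumption ..|].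
  rewrite <- (orbit_coef_sign_indep k (RtoC (-1))); assumption.
Qed.

Theorem lemma4p3 (k : nat) (pm : bool) (s t : nat) :
  (1 <= k)%nat -> (s < k)%nat -> (t < k)%nat ->
  lam k pm s t <> 3 ->
  ((forall x : vtx, in_P k x -> ufun k pm s t x = RtoC 0) <-> u_list k pm s t) /\
  ((forall x : vtx, in_P k x -> wfun k pm s t x = RtoC 0) <-> w_list k pm s t).
Proof.
  intros Hk Hs Ht Hl. split; split.
  - intros Hu. apply u_list_of_orbit_coef; [assumption ..|].
    apply exp_coef_eq0; [assumption|]. intros a b Ha Hb.
    rewrite <- ufun_VA by assumption. apply Hu. cbn. lia.
  - intros Hu x _. now apply orbit_vanish_of_u_list.
  - intros Hw. apply w_list_of_orbit_coef; [assumption ..|].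
    apply exp_coef_eq0; [assumption|]. intros a b Ha Hb.
    rewrite <- wfun_VA by assumption. apply Hw. cbn. lia.
  - intros Hw x _. destruct Hw as [Hst|[Hst|[Hst|Hu]]].
    + apply wfun_vanish_degenerate; [assumption|]. right; left. subst. reflexivity.
    + apply wfun_vanish_degenerate; [assumption|]. left. subst. reflexivity.
    + apply wfun_vanish_degenerate; [assumption|]. right; right. subst. reflexivity.
    + now apply orbit_vanish_of_u_list.
Qed.
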